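(* Let $\mathcal{M}=(\Sigma,\Gamma,\mathcal{H},U,M)$ be a QMM, $\rho$ a Hermitian operator on $\mathcal{H}$, and $m,k\in\mathbb{N}$. If $\operatorname{span}\mathfrak{D}_l(\rho,m)=\operatorname{span}\mathfrak{D}_l(\rho,m+1)$ for every $0\le l\le k$, then $\operatorname{span}\mathfrak{D}_l(\rho,m)=\operatorname{span}\mathfrak{D}_l(\rho,m+\delta)$ for every $0\le l\le k$ and every $\delta\in\mathbb{N}$.
   Context: A quantum Mealy machine (QMM) is a tuple $\mathcal{M}=(\Sigma,\Gamma,\mathcal{H},U,M)$ where $\Sigma,\Gamma$ are finite alphabets, $\mathcal{H}$ a finite-dimensional complex Hilbert space, $U=\{U_\sigma\}_{\sigma\in\Sigma}$ unitary operators on $\mathcal{H}$, $M=\{M_\gamma\}_{\gamma\in\Gamma}$ linear operators with $\sum_\gamma M_\gamma^\dagger M_\gamma=I$. For a word $a$, $|a|$ is its length, $a[l:r]=a[l]\cdots a[r]$ (empty if $l>r$), $U_a=U_{a[|a|]}\cdots U_{a[1]}$, $U_\epsilon=I$. A scheduler for $a\in\Sigma^*$ is a finite non-decreasing integer sequence $\mathcal{S}=(s_1\le\dots\le s_{|\mathcal{S}|})$ in $\{0,\dots,|a|\}$ (possibly empty); $\mathfrak{S}_a$ is the set of schedulers for $a$. With $s_0=0$, $s_{|\mathcal{S}|+1}=|a|$, $a_i=a[s_{i-1}+1:s_i]$. For $b\in\Gamma^{|\mathcal{S}|}$, $V_{b|a,\mathcal{S}}=U_{a_{|\mathcal{S}|+1}}M_{b_{|\mathcal{S}|}}U_{a_{|\mathcal{S}|}}\cdots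 M_{b_1}U_{a_1}$ and $\rho^{\mathcal{M}}_{b|a,\mathcal{S}}=V_{b|a,\mathcal{S}}\rho V_{b|a,\mathcal{S}}^\dagger$. For a Hermitian $\rho$ and $k,m\in\mathbb{N}$, $\mathfrak{D}_k(\rho,m)=\{\rho^{\mathcal{M}}_{b|a,\mathcal{S}}: a\in\Sigma^*,\mathcal{S}\in\mathfrak{S}_a,b\in\Gamma^{|\mathcal{S}|},|a|+|\mathcal{S}|\le m,|\mathcal{S}|\le k\}$; spans are complex linear spans in the space of operators on $\mathcal{H}$. *)

(* Complex field modelled by an arbitrary numClosedFieldType C. *)
From HB Require Import structures.
From mathcomp Require Import all_boot all_order all_algebra.
Set Implicit Arguments. Unset Strict Implicit. Unset Printing Implicit Defensive.
Import Order.TTheory GRing.Theory Num.Theory.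
Local Open Scope ring_scope.

Section QMM.
Variables (C : numClosedFieldType) (n : nat).

Definition dagger (A : 'M[C]_n) : 'M[C]_n := (map_mx Num.conj A)^T.

Definition unitary (A : 'M[C]_n) : Prop := dagger A *m A = 1%:M.
Definition herm_op (A : 'M[C]_n) : Prop := dagger A = A.

Definition is_QMM (Sigma Gamma : finType) (U : Sigma -> 'M[C]_n)
  (M : Gamma -> 'M[C]_n) : Prop :=
  (forall s, unitary (U s)) /\ \sum_(g : Gamma) dagger (M g) *m M g = 1%:M.

Variables (Sigma Gamma : finType) (U : Sigma -> 'M[C]_n) (M : Gamma -> 'M[C]_n).

(* U_a = U_{a[|a|]} ... U_{a[1]} *)
Definition Uword (a : seq Sigma) : 'M[C]_n := foldl (fun acc s => U s *m acc) 1%:M a.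

(* a[l+1 : r] *)
Definition segment (a : seq Sigma) (l r : nat) : seq Sigma := take (r - l) (drop l a).

(* Vrec a prev S b = U_{a_{last}} M_{b_k} ... M_{b_1} U_{a[prev+1 : s_1]} *)
Fixpoint Vrec (a : seq Sigma) (prev : nat) (S : seq nat) (b : seq Gamma) : 'M[C]_n :=
  match S, b with
  | s :: S', g :: b' => Vrec a s S' b' *m M g *m Uword (segment a prev s)
  | _, _ => Uword (segment a prev (size a))
  end.

Definition Vop (b : seq Gamma) (a : seq Sigma) (S : seq nat) : 'M[C]_n := Vrec a 0 S b.

Definition is_scheduler (a : seq Sigma) (S : seq nat) : bool :=
  sorted leq S && all (fun s => s <= size a)%N S.

Definition inD (rho : 'M[C]_n) (k m : nat) (X : 'M[C]_n) : Prop :=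
  exists (a : seq Sigma) (S : seq nat) (b : seq Gamma),
    [/\ is_scheduler a S, size b = size S, (size a + size S <= m)%N,
        (size S <= k)%N & X = Vop b a S *m rho *m dagger (Vop b a S)].

End QMM.

Definition in_span (C : numClosedFieldType) (n : nat) (P : 'M[C]_n -> Prop)
  (X : 'M[C]_n) : Prop :=
  exists l : seq ('M[C]_n * C),
    (forall p, p \in l -> P p.1) /\ X = \sum_(p <- l) p.2 *: p.1.

Definition span_eq (C : numClosedFieldType) (n : nat) (P Q : 'M[C]_n -> Prop) : Prop :=
  forall X, in_span P X <-> in_span Q X.

From HB Require Import structures.
From mathcomp Require Import all_boot all_order all_algebra.
From mathcomp Require Import zify.
Set Implicit Arguments. Unset Strict Implicit. Unset Printing Implicit Defensive.
Import Order.TTheory GRing.Theory Num.Theory.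
Local Open Scope ring_scope.

(* Every state rho_{b|a,S} is built from rho by successive conjugations
   X |-> A X A^dagger, each A being a unitary U_s (one more input letter)
   or a measurement operator M_g (one more scheduled measurement).  Reading
   the last step of the construction shows that an element of
   D_l(rho, N+1) is
   - already an element of D_l(rho, N), or
   - the U_s-conjugate of an element of D_l(rho, N), or
   - the M_g-conjugate of an element of D_{l-1}(rho, N)  (when l > 0),
   and conversely these conjugates always lie in D_l(rho, N+1).
   Since conjugation is linear it maps spans to spans, so by induction on
   delta, span D_l(rho, m+delta) <= span D_l(rho, m) for all l <= k: the
   conjugates of span D_l(rho, m) lie in span D_l(rho, m+1), which equals
   span D_l(rho, m) by hypothesis. *)

Definition conjm (C : numClosedFieldType) (n : nat) (A X : 'M[C]_n) : 'M[C]_n :=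
  A *m X *m dagger A.

Lemma dagger_mulmx (C : numClosedFieldType) (n : nat) (A B : 'M[C]_n) :
  dagger (A *m B) = dagger B *m dagger A.
Proof. by rewrite /dagger map_mxM trmx_mul. Qed.

Lemma conjmM (C : numClosedFieldType) (n : nat) (A B X : 'M[C]_n) :
  conjm (A *m B) X = conjm A (conjm B X).
Proof. by rewrite /conjm dagger_mulmx !mulmxA. Qed.

Section Span.
Variables (C : numClosedFieldType) (n : nat).
Implicit Types (P Q : 'M[C]_n -> Prop) (X : 'M[C]_n).

Lemma span_self P X : P X -> in_span P X.
Proof.
move=> PX; exists [:: (X, 1)]; split; last by rewrite big_seq1 scale1r.
by move=> p; rewrite inE => /eqP ->.
Qed.

Lemma span_comb Q (l : seq ('M[C]_n * C)) :
  (forall p, p \in l -> in_span Q p.1) -> in_span Q (\sum_(p <- l) p.2 *: p.1).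
Proof.
elim: l => [|[Y c] l IH] hl; first by exists [::]; rewrite !big_nil.
rewrite big_cons /=.
have [lY [hY ->]] : in_span Q Y by apply: (hl (Y, c)); rewrite inE eqxx.
have [lr [hr ->]] : in_span Q (\sum_(p <- l) p.2 *: p.1).
  by apply: IH => p hp; apply: hl; rewrite inE hp orbT.
exists ([seq (p.1, c * p.2) | p <- lY] ++ lr); split.
- by move=> p; rewrite mem_cat => /orP [/mapP [q /hY hq ->] | /hr].
- by rewrite big_cat big_map /= scaler_sumr; congr (_ + _); apply: eq_bigr => p _; rewrite scalerA.
Qed.

Lemma span_linear P Q (f : {linear 'M[C]_n -> 'M[C]_n}) X :
  (forall Z, P Z -> in_span Q (f Z)) -> in_span P X -> in_span Q (f X).
Proof.
move=> hf [l [hl ->]]; rewrite linear_sum.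
under eq_bigr do rewrite linearZ.
rewrite -(big_map (fun p => (f p.1, p.2)) xpredT (fun q => q.2 *: q.1)).
by apply: span_comb => q /mapP [p /hl /hf hp ->].
Qed.

Lemma span_trans P Q X :
  (forall Z, P Z -> in_span Q Z) -> in_span P X -> in_span Q X.
Proof. by move=> hPQ [l [hl ->]]; apply: span_comb => p /hl /hPQ. Qed.

Lemma span_conj P Q (A X : 'M[C]_n) :
  (forall Z, P Z -> in_span Q (conjm A Z)) -> in_span P X -> in_span Q (conjm A X).
Proof. exact: (@span_linear P Q (mulmxr (dagger A) \o mulmx A) X). Qed.

End Span.

Lemma sorted_rcons_leq (S : seq nat) x :
  sorted leq (rcons S x) = sorted leq S && all (fun y => y <= x)%N S.
Proof.
by rewrite -cats1 !(sorted_pairwise leq_trans) pairwise_cat /= andbT allrel1r andbC.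
Qed.

Section Operators.
Variables (C : numClosedFieldType) (n : nat) (Sigma Gamma : finType).
Variables (U : Sigma -> 'M[C]_n) (M : Gamma -> 'M[C]_n).

Lemma Uword_rcons (a : seq Sigma) s : Uword U (rcons a s) = U s *m Uword U a.
Proof. by rewrite /Uword foldl_rcons. Qed.

Lemma segment_rcons (a : seq Sigma) x p s :
  (p <= size a)%N -> (s <= size a)%N -> segment (rcons a x) p s = segment a p s.
Proof. by move=> hp hs; rewrite /segment -cats1 !take_drop takel_cat //; lia. Qed.

Lemma segment_rcons_end (a : seq Sigma) x p : (p <= size a)%N ->
  segment (rcons a x) p (size (rcons a x)) = rcons (segment a p (size a)) x.
Proof.
move=> hp; rewrite /segment drop_rcons // !take_oversize // ?size_rcons ?size_drop //; lia.
Qed.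

Lemma Vrec_rcons_letter (a : seq Sigma) x S b p :
  (p <= size a)%N -> all (fun s => s <= size a)%N S ->
  Vrec U M (rcons a x) p S b = U x *m Vrec U M a p S b.
Proof.
elim: S b p => [|s S IH] [|g b] p hp //=; try by rewrite segment_rcons_end // Uword_rcons.
by case/andP=> hs hS; rewrite IH // segment_rcons // !mulmxA.
Qed.

Lemma Vrec_rcons_measure (a : seq Sigma) S b g p :
  size b = size S ->
  Vrec U M a p (rcons S (size a)) (rcons b g) = M g *m Vrec U M a p S b.
Proof.
elim: S b p => [|s S IH] [|g' b] p //= hb.
- by rewrite /segment subnn take0 /Uword /= mul1mx.
- by case: hb => hb; rewrite IH // !mulmxA.
Qed.

Lemma Vop_rcons_letter (a : seq Sigma) x S b :
  all (fun s => s <= size a)%N S -> Vop U M b (rcons a x) S = U x *m Vop U M b a S.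
Proof. exact: Vrec_rcons_letter. Qed.

Lemma Vop_rcons_measure (a : seq Sigma) S b g :
  size b = size S -> Vop U M (rcons b g) a (rcons S (size a)) = M g *m Vop U M b a S.
Proof. exact: Vrec_rcons_measure. Qed.

End Operators.

Section Reachable.
Variables (C : numClosedFieldType) (n : nat) (Sigma Gamma : finType).
Variables (U : Sigma -> 'M[C]_n) (M : Gamma -> 'M[C]_n) (rho : 'M[C]_n).
Local Notation D := (inD U M rho).
Local Notation state b a S := (conjm (Vop U M b a S) rho).

Lemma inD_widen l N N' X : (N <= N')%N -> D l N X -> D l N' X.
Proof.
move=> hN [a [S [b [hs hb hsz hk ->]]]].
by exists a, S, b; split => //; apply: leq_trans hN.
Qed.

Lemma inD_conj_letter l N Y s : D l N Y -> D l N.+1 (conjm (U s) Y).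
Proof.
move=> [a [S [b [/andP [hso hal] hb hsz hk ->]]]].
exists (rcons a s), S, b; split => //; last by rewrite Vop_rcons_letter //; apply/esym/conjmM.
- rewrite /is_scheduler hso size_rcons.
  by apply/allP => y /(allP hal) /= /leqW.
- by rewrite size_rcons.
Qed.

Lemma inD_conj_measure l N Y g : D l N Y -> D l.+1 N.+1 (conjm (M g) Y).
Proof.
move=> [a [S [b [/andP [hso hal] hb hsz hk ->]]]].
exists a, (rcons S (size a)), (rcons b g); split; rewrite ?size_rcons //.
- by rewrite /is_scheduler sorted_rcons_leq hso hal all_rcons leqnn hal.
- by rewrite hb.
- by rewrite addnS.
- by rewrite Vop_rcons_measure //; apply/esym/conjmM.
Qed.

Lemma inD_succ l N X : D l N.+1 X ->
  [\/ D l N X,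
      exists s Y, D l N Y /\ X = conjm (U s) Y
    | exists g l' Y, [/\ l = l'.+1, D l' N Y & X = conjm (M g) Y]].
Proof.
move=> [a [S [b [hsch hb hsz hk ->]]]].
(* the run ends with a letter x after the last measurement *)
have letter_last a' x : a = rcons a' x -> all (fun s => s <= size a')%N S ->
    exists s Y, D l N Y /\ state b a S = conjm (U s) Y.
  move=> ea hal; exists x, (state b a' S); rewrite ea Vop_rcons_letter // conjmM.
  split=> //; exists a', S, b; split=> //; last by move: hsz; rewrite ea size_rcons.
  by rewrite /is_scheduler hal andbT; case/andP: hsch.
move: hsch hb hsz hk; case/lastP: S letter_last => [|S' s] letter_last.
  case/lastP: a letter_last => [|a' x] letter_last hsch hb hsz hk.
    by apply: Or31; exists [::], [::], b.
  by apply: Or32; apply: (letter_last a' x).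
rewrite /is_scheduler sorted_rcons_leq all_rcons => /and3P [/andP [hso hle] hsa hal].
case: (ltngtP s (size a)) hsa => // [hlt | ->] _ hb hsz hk.
- (* the last measurement is followed by at least one letter *)
  case/lastP: a hlt hal hsz letter_last => [|a' x] // hlt hal hsz letter_last.
  apply: Or32; apply: (letter_last a' x) => //.
  rewrite size_rcons ltnS in hlt.
  by rewrite all_rcons hlt; apply/allP => y /(allP hle) /= /leq_trans; apply.
- (* the run ends with a measurement *)
  clear letter_last; case/lastP: b hb => [|b' g]; rewrite !size_rcons // => -[hb].
  case: l hk => [|l'] hk; first by rewrite size_rcons in hk.
  apply: Or33; exists g, l', (state b' a S'); split=> //.
    exists a, S', b'; split=> //; first by rewrite /is_scheduler hso.
    + by move: hsz; rewrite size_rcons addnS.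
    + by move: hk; rewrite size_rcons.
  by rewrite Vop_rcons_measure //; exact: conjmM.
Qed.

Lemma inD_extend_in_span m k :
  (forall l, (l <= k)%N -> span_eq (D l m) (D l m.+1)) ->
  forall delta l X, (l <= k)%N -> D l (m + delta) X -> in_span (D l m) X.
Proof.
move=> stab; elim=> [|d IH] l X hl; first by rewrite addn0; apply: span_self.
rewrite addnS => /inD_succ [hX | [s [Y [hY ->]]] | [g [l' [Y [el hY ->]]]]].
- exact: IH.
- apply: span_conj (IH l Y hl hY) => Z hZ.
  by apply/(stab l hl)/span_self/inD_conj_letter.
- subst l; apply: span_conj (IH l' Y (ltnW hl) hY) => Z hZ.
  by apply/(stab _ hl)/span_self/inD_conj_measure.
Qed.

End Reachable.

Theorem lemma1 (C : numClosedFieldType) (n : nat) (Sigma Gamma : finType)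
  (U : Sigma -> 'M[C]_n) (M : Gamma -> 'M[C]_n) (rho : 'M[C]_n) (m k : nat) :
  is_QMM U M -> herm_op rho ->
  (forall l : nat, (l <= k)%N ->
     span_eq (inD U M rho l m) (inD U M rho l m.+1)) ->
  forall l delta : nat, (l <= k)%N ->
     span_eq (inD U M rho l m) (inD U M rho l (m + delta)).
Proof.
move=> _ _ stab l delta hl X; split.
- apply: span_trans => Z hZ; apply: span_self.
  exact: (inD_widen (leq_addr delta m) hZ).
- by apply: span_trans => Z; apply: inD_extend_in_span stab delta l Z hl.
Qed.
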